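(* Let $\varphi$ be a coprime automorphism of a pronilpotent group $G$. Then the restriction of the map $\theta\colon x\mapsto[x,\varphi]$ to the set $K=\{[g,\varphi]\mid g\in G\}$ is injective.
   Context: $\varphi$ is a coprime automorphism of a profinite group $H$ if the procyclic group $\langle\varphi\rangle$ acts faithfully on $H$ by continuous automorphisms and $\pi(\langle\varphi\rangle)\cap\pi(H)=\varnothing$, where $\pi(X)$ denotes the set of primes dividing the (Steinitz) orders of elements of $X$. Here $[x,\varphi]=x^{-1}x^{\varphi}$. *)

From mathcomp Require Import all_boot.
From mathcomp Require Import boolp classical_sets topology.
Set Implicit Arguments. Unset Strict Implicit. Unset Printing Implicit Defensive.
Local Open Scope classical_set_scope.

Section Defs.
Variables (T : topologicalType) (mul : T -> T -> T) (inv : T -> T) (e : T).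

Definition group_laws : Prop :=
  [/\ forall x y z, mul x (mul y z) = mul (mul x y) z,
      forall x, mul e x = x &
      forall x, mul (inv x) x = e].

Definition topological_group : Prop :=
  [/\ group_laws,
      continuous (fun p : T * T => mul p.1 p.2) &
      continuous inv].

Definition profinite_group : Prop :=
  [/\ topological_group, compact [set: T], hausdorff_space T &
      totally_disconnected [set: T]].

Definition gpow (x : T) (n : nat) : T := iter n (mul x) e.

Definition subgroup (U : set T) : Prop :=
  [/\ U e, forall x y, U x -> U y -> U (mul x y) & forall x, U x -> U (inv x)].

Definition normal (U : set T) : Prop :=
  forall g x, U x -> U (mul (inv g) (mul x g)).

Definition open_normal_subgroup (U : set T) : Prop :=
  [/\ open U, subgroup U & normal U].

(* commutator [x, y] = x^-1 y^-1 x y, and left-normed commutators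
   [x0, s_1, ..., s_k] = [[x0, s_1, ..., s_(k-1)], s_k] *)
Definition comm (x y : T) : T := mul (inv x) (mul (inv y) (mul x y)).
Definition lcomm (x0 : T) (s : seq T) : T := foldl comm x0 s.

(* G/U is nilpotent (of class <= c): gamma_(c+1)(G/U) = 1, i.e. every
   left-normed commutator of weight c+1 lies in U *)
Definition nilpotent_quotient (U : set T) : Prop :=
  exists c : nat, forall (x0 : T) (s : seq T), size s = c -> U (lcomm x0 s).

Definition pronilpotent_group : Prop :=
  profinite_group /\
  forall U, open_normal_subgroup U -> nilpotent_quotient U.

(* p divides the Steinitz order of the element x: p divides the order of the
   image of x in some continuous finite quotient G/U *)
Definition prime_divides_order (p : nat) (x : T) : Prop :=
  prime p /\
  exists U, open_normal_subgroup U /\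
    exists n, [/\ 0 < n, U (gpow x n),
                  (forall m, 0 < m < n -> ~ U (gpow x m)) & p %| n].

Definition pi_set (X : set T) (p : nat) : Prop :=
  exists x, X x /\ prime_divides_order p x.

Definition topologically_generated_by (x : T) : Prop :=
  closure [set y | exists n, y = gpow x n \/ y = inv (gpow x n)] = [set: T].

End Defs.

Section Coprime.
Variables (G : topologicalType) (mul : G -> G -> G) (inv : G -> G) (e : G).
Variables (A : topologicalType) (amul : A -> A -> A) (ainv : A -> A) (ae : A).
Variables (act : A -> G -> G) (phi : A).

(* A is the procyclic group <phi>, acting (on the right, x^(ab) = (x^a)^b)
   continuously and faithfully on G by (continuous) group automorphisms *)
Definition coprime_automorphism : Prop :=
  [/\ profinite_group amul ainv ae,
      topologically_generated_by amul ainv ae phi,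
      [/\ forall x, act ae x = x,
          forall a b x, act (amul a b) x = act b (act a x),
          forall a x y, act a (mul x y) = mul (act a x) (act a y) &
          continuous (fun p : A * G => act p.1 p.2)],
      (forall a, (forall x, act a x = x) -> a = ae) &
      (forall p, pi_set amul ainv ae [set: A] p -> ~ pi_set mul inv e [set: G] p)].

Definition theta (x : G) : G := mul (inv x) (act phi x).

Definition Kset : set G := [set theta g | g in [set: G]].

End Coprime.

(* Write k_i = [g_i, phi] and c = k_2 k_1^-1.  From [k_1, phi] = [k_2, phi] one gets
   c^phi = c, and c [g_1, phi] = [g_2, phi].  As a profinite group is zero-dimensional,
   it suffices to show that c lies in every open normal subgroup U.  Modulo U the group
   is nilpotent, c has a finite order m and phi acts with a finite order n, and m and n
   are coprime because phi is a coprime automorphism.  Now descend the upper central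
   series Z_i of G/U: if c is central modulo Z_i, the norm map
   x |-> x x^phi ... x^(phi^(n-1)), which sends [g, phi] to [g, phi^n] = 1 mod U,
   turns c [g_1, phi] = [g_2, phi] into c^n = 1 mod Z_i; with c^m = 1 this gives
   c = 1 mod Z_i. *)

From mathcomp Require Import all_boot.
From mathcomp Require Import boolp classical_sets topology.
Set Implicit Arguments. Unset Strict Implicit. Unset Printing Implicit Defensive.
Local Open Scope classical_set_scope.

Lemma ex_minn_pos (P : nat -> Prop) : (exists2 n, 0 < n & P n) ->
  exists n, [/\ 0 < n, P n & forall m, 0 < m < n -> ~ P m].
Proof.
move=> [n n_gt0 Pn].
have ex : exists n, `[< 0 < n /\ P n >] by exists n; apply/asboolP.
case: (ex_minnP ex) => k /asboolP[k_gt0 Pk] k_min.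
exists k; split=> // j /andP[j_gt0 jk] Pj.
by have := k_min j (asboolT (conj j_gt0 Pj)); rewrite leqNgt jk.
Qed.

Section Group.
Variables (T : topologicalType) (mul : T -> T -> T) (inv : T -> T) (e : T).
Hypothesis gl : group_laws mul inv e.

Lemma mulgA x y z : mul x (mul y z) = mul (mul x y) z. Proof. by case: gl. Qed.
Lemma mul1g x : mul e x = x. Proof. by case: gl. Qed.
Lemma mulVg x : mul (inv x) x = e. Proof. by case: gl. Qed.
Lemma mulKg x y : mul (inv x) (mul x y) = y. Proof. by rewrite mulgA mulVg mul1g. Qed.

Lemma mulgV x : mul x (inv x) = e.
Proof. by rewrite -[LHS](mulKg (inv x)) (mulgA (inv x)) mulVg mul1g mulVg. Qed.

Lemma mulg1 x : mul x e = x. Proof. by rewrite -(mulVg x) mulgA mulgV mul1g. Qed.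
Lemma mulKVg x y : mul x (mul (inv x) y) = y. Proof. by rewrite mulgA mulgV mul1g. Qed.
Lemma mulgK x y : mul (mul y x) (inv x) = y. Proof. by rewrite -mulgA mulgV mulg1. Qed.
Lemma mulgKV x y : mul (mul y (inv x)) x = y. Proof. by rewrite -mulgA mulVg mulg1. Qed.
Lemma mulgI x y z : mul x y = mul x z -> y = z.
Proof. by move=> eq_xy; rewrite -(mulKg x y) eq_xy mulKg. Qed.

Lemma mulg_eq1_inv x y : mul x y = e -> x = inv y.
Proof. by move=> xy1; rewrite -(mulgK y x) xy1 mul1g. Qed.

Lemma invgK x : inv (inv x) = x.
Proof. by symmetry; apply: mulg_eq1_inv; rewrite mulgV. Qed.

Lemma invMg x y : inv (mul x y) = mul (inv y) (inv x).
Proof. by symmetry; apply: mulg_eq1_inv; rewrite -mulgA (mulgA (inv x)) mulVg mul1g mulVg. Qed.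

Lemma invg1 : inv e = e. Proof. by rewrite -(mulg1 (inv e)) mulVg. Qed.

Lemma gpowD x a b : gpow mul e x (a + b) = mul (gpow mul e x a) (gpow mul e x b).
Proof. by elim: a => [|a IH]; rewrite ?add0n ?mul1g // addSn /= IH mulgA. Qed.

Lemma gpowM x a b : gpow mul e x (a * b) = gpow mul e (gpow mul e x a) b.
Proof. by elim: b => [|b IH]; rewrite ?muln0 // mulnS gpowD IH. Qed.

Local Ltac group_simpl :=
  rewrite /comm ?invMg ?invgK -?mulgA ?(mulKg, mulKVg, mulVg, mulgV, mulg1, mul1g, invg1).

Lemma comm1g y : comm mul inv e y = e. Proof. by group_simpl. Qed.

Lemma commMg x y z : comm mul inv (mul x y) z =
  mul (mul (inv y) (mul (comm mul inv x z) y)) (comm mul inv y z).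
Proof. by group_simpl. Qed.

Lemma commVg x z :
  comm mul inv (inv x) z = mul (inv (inv x)) (mul (inv (comm mul inv x z)) (inv x)).
Proof. by group_simpl. Qed.

Lemma commJg g x y : comm mul inv (mul (inv g) (mul x g)) y =
  mul (inv g) (mul (comm mul inv x (mul g (mul y (inv g)))) g).
Proof. by group_simpl. Qed.

Section Subgroup.
Variable S : set T.
Hypothesis sS : subgroup mul inv e S.

Lemma subgroup1 : S e. Proof. by case: sS. Qed.
Lemma subgroupM x y : S x -> S y -> S (mul x y). Proof. by case: sS => _ + _; apply. Qed.
Lemma subgroupV x : S x -> S (inv x). Proof. by case: sS => _ _; apply. Qed.
Lemma subgroupVr x : S (inv x) -> S x. Proof. by move/subgroupV; rewrite invgK. Qed.

Lemma subgroupMr x y : S y -> S (mul x y) -> S x.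
Proof. by move=> Sy Sxy; rewrite -(mulgK y x); apply: subgroupM => //; apply: subgroupV. Qed.

Lemma subgroupX x n : S x -> S (gpow mul e x n).
Proof. by move=> Sx; elim: n => [|n IH]; [apply: subgroup1 | apply: subgroupM]. Qed.

Lemma subgroup_coprime_gpow x m n : 0 < m -> coprime m n ->
  S (gpow mul e x m) -> S (gpow mul e x n) -> S x.
Proof.
move=> m_gt0 /eqP mn1 Sxm Sxn.
have [a _] := Bezoutl n m_gt0; rewrite mn1 => /dvdnP[q def_q].
have : S (gpow mul e x (1 + a * n)) by rewrite def_q mulnC gpowM; apply: subgroupX.
by rewrite gpowD mulnC gpowM /= mulg1; apply: subgroupMr; apply: subgroupX.
Qed.

End Subgroup.

Definition core (S : set T) := [set y | forall g, S (mul (inv g) (mul y g))].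

Lemma core_sub S : core S `<=` S.
Proof. by move=> y /(_ e); rewrite invg1 mul1g mulg1. Qed.

Lemma core_subgroup S : subgroup mul inv e S -> subgroup mul inv e (core S).
Proof.
move=> sS; split=> [g | x y Cx Cy g | x Cx g].
- by rewrite mul1g mulVg; apply: subgroup1.
- have -> : mul (inv g) (mul (mul x y) g) =
      mul (mul (inv g) (mul x g)) (mul (inv g) (mul y g)) by group_simpl.
  exact: subgroupM.
- have -> : mul (inv g) (mul (inv x) g) = inv (mul (inv g) (mul x g)) by group_simpl.
  exact: subgroupV.
Qed.

Lemma core_normal S : normal mul inv (core S).
Proof.
move=> h x Cx g.
have -> : mul (inv g) (mul (mul (inv h) (mul x h)) g) =
    mul (inv (mul h g)) (mul x (mul h g)) by group_simpl.
exact: Cx.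
Qed.

Definition rstab (W : set T) := [set x | forall w, W (mul w x) <-> W w].

Lemma rstab_subgroup W : subgroup mul inv e (rstab W).
Proof.
split=> [w | x y Wx Wy w | x Wx w]; first by rewrite mulg1.
  by rewrite mulgA Wy Wx.
by rewrite -(Wx (mul w (inv x))) mulgKV.
Qed.

Lemma rstab_sub W : W e -> rstab W `<=` W.
Proof. by move=> We x /(_ e); rewrite mul1g => ->. Qed.

Definition centre_mod (Z : set T) := [set x | forall y, Z (comm mul inv x y)].

Lemma centre_mod_normal_subgroup Z :
  subgroup mul inv e Z -> normal mul inv Z ->
  subgroup mul inv e (centre_mod Z) /\ normal mul inv (centre_mod Z).
Proof.
move=> sZ nZ; split; first split.
- by move=> y; rewrite comm1g; apply: subgroup1.
- move=> x y Zx Zy z; rewrite commMg.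
  exact: (subgroupM sZ (nZ y _ (Zx z)) (Zy z)).
- by move=> x Zx z; rewrite commVg; exact: (nZ _ _ (subgroupV sZ (Zx z))).
- by move=> g x Zx y; rewrite commJg; exact: (nZ _ _ (Zx _)).
Qed.

Section UpperCentralSeries.
Variable U : set T.
Hypotheses (sU : subgroup mul inv e U) (nU : normal mul inv U).

(* [zeta i] is the preimage in [T] of the [i]-th centre of [T / U]. *)
Fixpoint zeta i := if i is i'.+1 then centre_mod (zeta i') else U.

Lemma zeta_normal_subgroup i : subgroup mul inv e (zeta i) /\ normal mul inv (zeta i).
Proof. by elim: i => [|i [sZ nZ]] //=; apply: centre_mod_normal_subgroup. Qed.

Lemma sub_zeta i : U `<=` zeta i.
Proof.
elim: i => [|i IH] //= x Ux y; apply: IH.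
by apply: subgroupM => //; [apply: subgroupV | apply: nU].
Qed.

Lemma lcomm_zeta i x : (forall s, size s = i -> U (lcomm mul inv x s)) -> zeta i x.
Proof.
elim: i x => [|i IH] x xU /=; first exact: (xU [::]).
by move=> y; apply: IH => s size_s; apply: (xU (y :: s)); rewrite /= size_s.
Qed.

Section NormMap.
Variable f : T -> T.
Hypothesis fM : forall x y, f (mul x y) = mul (f x) (f y).

Lemma morph1 : f e = e.
Proof. by apply: (@mulgI (f e)); rewrite -fM !mulg1. Qed.

Lemma morphV x : f (inv x) = inv (f x).
Proof. by apply: mulg_eq1_inv; rewrite -fM mulVg morph1. Qed.

Lemma theta_eq_fixed x y : mul (inv x) (f x) = mul (inv y) (f y) ->
  f (mul y (inv x)) = mul y (inv x).
Proof.
move=> eq_xy; rewrite fM morphV.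
have -> : f y = mul y (mul (inv x) (f x)) by rewrite eq_xy mulKVg.
by rewrite mulgA mulgK.
Qed.

Fixpoint fnorm j x := if j is j'.+1 then mul x (fnorm j' (f x)) else e.

Lemma fnorm_theta j g : fnorm j (mul (inv g) (f g)) = mul (inv g) (iter j f g).
Proof.
elim: j g => [|j IH] g /=; first by rewrite mulVg.
by rewrite fM morphV IH -iterSr -mulgA mulKVg.
Qed.

Lemma fnorm_mul_central i c j k : zeta i.+1 c -> f c = c ->
  zeta i (mul (inv (mul (gpow mul e c j) (fnorm j k))) (fnorm j (mul c k))).
Proof.
move=> Zc fc; have [sZ nZ] := zeta_normal_subgroup i.
elim: j k => [|j IH] k /=; first by rewrite !mulg1 invg1; apply: subgroup1.
rewrite fM fc; have := IH (f k).
set a := fnorm j (f k); set b := fnorm j (mul c (f k)); set w := mul _ b => Zw.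
have -> : b = mul (mul (gpow mul e c j) a) w by rewrite /w mulKVg.
(* One more step multiplies the defect [w] by a conjugate of [[c^j, k]^-1], which lies
   in [zeta i] because [c] is central modulo [zeta i]. *)
have -> : mul (inv (mul (mul c (gpow mul e c j)) (mul k a)))
            (mul (mul c k) (mul (mul (gpow mul e c j) a) w)) =
          mul (mul (inv a) (mul (inv (comm mul inv (gpow mul e c j) k)) a)) w.
  by group_simpl.
have Zcj : zeta i.+1 (gpow mul e c j).
  exact: (subgroupX (zeta_normal_subgroup i.+1).1 j Zc).
exact: (subgroupM sZ (nZ a _ (subgroupV sZ (Zcj k))) Zw).
Qed.

Section Period.
Variable n : nat.
Hypothesis f_periodic : forall x, U (mul (inv x) (iter n f x)).

Lemma fixed_gpow_zeta i c g1 g2 : zeta i.+1 c -> f c = c ->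
  mul c (mul (inv g1) (f g1)) = mul (inv g2) (f g2) -> zeta i (gpow mul e c n).
Proof.
move=> Zc fc cg12; have [sZ _] := zeta_normal_subgroup i.
have := fnorm_mul_central n (mul (inv g1) (f g1)) Zc fc.
rewrite cg12 !fnorm_theta => Zcn.
have Zf g : zeta i (mul (inv g) (iter n f g)) by apply/sub_zeta/f_periodic.
exact: (subgroupMr sZ (Zf g1) (subgroupVr sZ (subgroupMr sZ (Zf g2) Zcn))).
Qed.

Lemma fixed_mul_theta_in_normal cl c g1 g2 m :
  (forall x s, size s = cl -> U (lcomm mul inv x s)) ->
  0 < m -> coprime m n -> f c = c ->
  mul c (mul (inv g1) (f g1)) = mul (inv g2) (f g2) ->
  U (gpow mul e c m) -> U c.
Proof.
move=> nil m_gt0 mn fc cg12 cmU.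
have : zeta cl c by apply: lcomm_zeta => s /nil.
elim: cl {nil} => [//|i IH] Zc; apply: IH.
apply: (subgroup_coprime_gpow (zeta_normal_subgroup i).1 m_gt0 mn).
  exact: sub_zeta.
exact: (fixed_gpow_zeta Zc fc cg12).
Qed.

End Period.
End NormMap.
End UpperCentralSeries.
End Group.

Lemma continuous_open_nbhs (X Y : topologicalType) (f : X -> Y) x (O : set Y) :
  {for x, continuous f} -> open O -> O (f x) -> \forall t \near x, O (f t).
Proof. by move=> cf oO Ofx; apply: cf; exact: open_nbhs_nbhs. Qed.

Lemma fst_continuous (X Y : topologicalType) : continuous (@fst X Y).
Proof. by case=> x y; exact: cvg_fst. Qed.

Lemma snd_continuous (X Y : topologicalType) : continuous (@snd X Y).
Proof. by case=> x y; exact: cvg_snd. Qed.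

Lemma tube_lemma (X Y : topologicalType) (K : set Y) (x0 : X) (P : X -> Y -> Prop) :
  compact K -> (forall y, K y -> \forall p \near (x0, y), P p.1 p.2) ->
  \forall x \near x0, forall y, K y -> P x y.
Proof.
move=> /compact_near_coveringP cK near_P; apply: cK => y Ky.
have [[A B] [nA nB] AB] := near_P y Ky.
by exists (B, A) => // -[y' x'] [By' Ax']; exact: (AB (x', y')).
Qed.

Section TopologicalGroup.
Variables (T : topologicalType) (mul : T -> T -> T) (inv : T -> T) (e : T).
Hypothesis tg : topological_group mul inv e.

Let gl : group_laws mul inv e. Proof. by case: tg. Qed.

Lemma continuous_mulg (X : topologicalType) (f g : X -> T) x :
  {for x, continuous f} -> {for x, continuous g} ->
  {for x, continuous (fun t => mul (f t) (g t))}.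
Proof. by case: tg => _ mulC _ cf cg; exact: (continuous2_cvg _ (mulC (f x, g x)) cf cg). Qed.

Lemma continuous_invg (X : topologicalType) (f : X -> T) x :
  {for x, continuous f} -> {for x, continuous (fun t => inv (f t))}.
Proof. by case: tg => _ _ invC cf; exact: (continuous_comp cf (invC _)). Qed.

Lemma continuous_lmulg a : continuous (mul a).
Proof. by move=> x; apply: continuous_mulg; [exact: cst_continuous | exact: cvg_id]. Qed.

Lemma open_subgroup_of_nbhs H : subgroup mul inv e H -> nbhs e H -> open H.
Proof.
move=> sH nH; rewrite openE => x Hx.
have : \forall t \near x, H (mul (inv x) t).
  by have /(_ H) := @continuous_lmulg (inv x) x; rewrite /= (mulVg gl); apply.
by apply: filterS => t Ht; rewrite -(mulKVg gl x t); exact: (subgroupM sH Hx Ht).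
Qed.

Hypothesis cpt : compact [set: T].

Lemma exists_gpow_in_open_subgroup x S : open S -> subgroup mul inv e S ->
  exists2 n, 0 < n & S (gpow mul e x n).
Proof.
(* Two arbitrarily large powers of [x] lie in the neighbourhood [z S] of a cluster
   point [z] of the powers of [x]; their quotient is a positive power in [S]. *)
move=> oS sS; have [z [_ clz]] := @cpt ((gpow mul e x) @ \oo) _ filterT.
have near_z : \forall y \near z, S (mul (inv z) y).
  apply: (continuous_open_nbhs _ oS); first exact: continuous_lmulg.
  by rewrite (mulVg gl); exact: (subgroup1 sS).
have late N : exists2 n, N < n & S (mul (inv z) (gpow mul e x n)).
  have FN : ((gpow mul e x) @ \oo) [set y | exists2 n, N < n & gpow mul e x n = y].
    by apply: filterS (nbhs_infty_gt N) => n Nn; exists n.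
  by have [_ [[n Nn <-] Sn]] := clz _ _ FN near_z; exists n.
have [n1 _ S1] := late 0; have [n2 n12 S2] := late n1.
exists (n2 - n1); first by rewrite subn_gt0.
have := subgroupM sS (subgroupV sS S1) S2.
rewrite (invMg gl) (invgK gl) -(mulgA gl) (mulKVg gl).
by rewrite -{1}(subnKC (ltnW n12)) (gpowD gl) (mulKg gl).
Qed.

Lemma clopen_rstab_open W : clopen W -> open (rstab mul W).
Proof.
case=> oW cW; apply: open_subgroup_of_nbhs; first exact: rstab_subgroup.
have : \forall x \near e, forall w, W w -> W (mul w x) /\ W (mul w (inv x)).
  apply: tube_lemma; first exact: (subclosed_compact cW cpt).
  move=> w Ww.
  have Wr : \forall p \near (e, w), W (mul p.2 p.1).
    apply: (continuous_open_nbhs _ oW); last by rewrite /= (mulg1 gl).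
    by apply: continuous_mulg; [exact: snd_continuous | exact: fst_continuous].
  have Wl : \forall p \near (e, w), W (mul p.2 (inv p.1)).
    apply: (continuous_open_nbhs _ oW); last by rewrite /= (invg1 gl) (mulg1 gl).
    apply: continuous_mulg; first exact: snd_continuous.
    by apply: continuous_invg; exact: fst_continuous.
  by apply: filterS2 Wr Wl.
apply: filterS => x Wx w; split; last by move=> /Wx[].
by move=> /Wx[_]; rewrite (mulgK gl).
Qed.

Lemma open_core S : open S -> subgroup mul inv e S -> open (core mul inv S).
Proof.
move=> oS sS; apply: open_subgroup_of_nbhs; first exact: core_subgroup.
have : \forall y \near e, forall g, [set: T] g -> S (mul (inv g) (mul y g)).
  apply: tube_lemma cpt _ => g _; apply: (continuous_open_nbhs _ oS).
    apply: continuous_mulg; first by apply: continuous_invg; exact: snd_continuous.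
    by apply: continuous_mulg; [exact: fst_continuous | exact: snd_continuous].
  by rewrite /= (mul1g gl) (mulVg gl); exact: (subgroup1 sS).
by apply: filterS => y Sy g; exact: Sy.
Qed.

End TopologicalGroup.

Section ContinuousAction.
Variables (G : topologicalType) (mul : G -> G -> G) (inv : G -> G) (e : G).
Variables (A : topologicalType) (amul : A -> A -> A) (ainv : A -> A) (ae : A).
Variable act : A -> G -> G.
Hypotheses (tgG : topological_group mul inv e) (cG : compact [set: G]).
Hypotheses (tgA : topological_group amul ainv ae) (cA : compact [set: A]).
Hypotheses (act1 : forall x, act ae x = x)
  (actM : forall a b x, act (amul a b) x = act b (act a x))
  (act_cont : continuous (fun p : A * G => act p.1 p.2)).

Lemma act_gpow a n x : act (gpow amul ae a n) x = iter n (act a) x.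
Proof. by elim: n x => [|n IH] x //=; rewrite actM IH -iterSr. Qed.

Lemma exists_open_normal_kernel_mod U : open U -> subgroup mul inv e U ->
  exists V, open_normal_subgroup amul ainv ae V /\
    forall a x, V a -> U (mul (inv x) (act a x)).
Proof.
move=> oU sU.
have glG : group_laws mul inv e by case: tgG.
have glA : group_laws amul ainv ae by case: tgA.
pose K := [set a | forall x, U (mul (inv x) (act a x))].
have sK : subgroup amul ainv ae K.
  split=> [x | a b Ka Kb x | a Ka x].
  - by rewrite act1 (mulVg glG); exact: (subgroup1 sU).
  - rewrite actM -(mulKVg glG (act a x) (act b (act a x))) (mulgA glG).
    exact: (subgroupM sU (Ka x) (Kb _)).
  - have := subgroupV sU (Ka (act (ainv a) x)).
    by rewrite -actM (mulVg glA) act1 (invMg glG) (invgK glG).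
have oK : open K.
  apply: (open_subgroup_of_nbhs tgA sK).
  have : \forall a \near ae, forall x, [set: G] x -> U (mul (inv x) (act a x)).
    apply: tube_lemma cG _ => x _; apply: (continuous_open_nbhs _ oU).
      apply: (continuous_mulg tgG); last exact: act_cont.
      by apply: (continuous_invg tgG); exact: snd_continuous.
    by rewrite /= act1 (mulVg glG); exact: (subgroup1 sU).
  by apply: filterS => a Ka x; exact: Ka.
exists (core amul ainv K); split; last by move=> a x /(core_sub glA) /(_ x).
split; [exact: (open_core tgA cA oK sK) | exact: (core_subgroup glA sK) |].
exact: (core_normal glA).
Qed.

End ContinuousAction.

Definition quasi_component (T : topologicalType) (x : T) :=
  [set z | forall C : set T, clopen C -> C x -> C z].

Lemma closed_quasi_component (T : topologicalType) (x : T) :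
  closed (quasi_component x).
Proof.
move=> z clz C [oC cC] Cx; apply: contrapT => nCz.
have nCz_nbhs : nbhs z (~` C) by apply: open_nbhs_nbhs; split=> //; exact: closed_openC.
by have [q [Qq nCq]] := clz _ nCz_nbhs; exact: nCq (Qq C (conj oC cC) Cx).
Qed.

Section ZeroDimensional.
Variable T : topologicalType.
Hypotheses (hT : hausdorff_space T) (cT : compact [set: T]).

Lemma separate_closed (P R : set T) : closed P -> closed R -> P `&` R = set0 ->
  exists U V, [/\ open U, open V, P `<=` U, R `<=` V & U `&` V = set0].
Proof.
move=> cP cR PR.
have snP : set_nbhs P (~` R).
  move=> p Pp; apply: open_nbhs_nbhs; split; first exact: closed_openC.
  by move=> Rp; have : (P `&` R) p by []; rewrite PR.
have [D sD cD] := compact_normal hT cT cP snP.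
exists (interior D), (~` closure D); split.
- exact: open_interior.
- exact/closed_openC/closed_closure.
- by move=> p Pp; apply: sD.
- by move=> r Rr cDr; exact: (cD r cDr Rr).
- apply/seteqP; split=> // u [Du nDu]; apply: nDu; apply: subset_closure.
  exact: (nbhs_singleton Du).
Qed.

Lemma clopen_sub_open (x : T) W : open W -> quasi_component x `<=` W ->
  exists C, [/\ clopen C, C x & C `<=` W].
Proof.
move=> oW QW; apply: contrapT => noC.
have cK : compact (~` W) by apply: (subclosed_compact _ cT) => //; exact: open_closedC.
pose F := filter_from [set C | clopen C /\ C x] (fun C => C `&` ~` W).
have FF : Filter F.
  apply: filter_from_filter; first by exists setT; split=> //; exact: clopenT.
  move=> C1 C2 [clC1 C1x] [clC2 C2x]; exists (C1 `&` C2); first by split; [exact: clopenI|].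
  by move=> z [[? ?] ?].
have PF : ProperFilter F.
  apply: filter_from_proper => C [clC Cx]; apply/set0P/eqP => CW; apply: noC.
  exists C; split=> // z Cz; apply: contrapT => nWz.
  by have : (C `&` ~` W) z by []; rewrite CW.
have FW : F (~` W) by exists setT; [split=> //; exact: clopenT | move=> z []].
have [z [nWz clz]] := cK F PF FW.
apply: nWz; apply: QW => C clC Cx; apply: contrapT => nCz.
have nCz_nbhs : nbhs z (~` C).
  by apply: open_nbhs_nbhs; split=> //; case: clC => _; exact: closed_openC.
have FC : F (C `&` ~` W) by exists C.
by have [w [[Cw _] nCw]] := clz _ _ FC nCz_nbhs; exact: nCw Cw.
Qed.

Lemma quasi_component_sub (x : T) (P R : set T) : closed P -> closed R ->
  P `&` R = set0 -> quasi_component x `<=` P `|` R -> P x -> quasi_component x `<=` P.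
Proof.
move=> cP cR PR QPR Px.
have [U [V [oU oV PU RV UV]]] := separate_closed cP cR PR.
have QUV : quasi_component x `<=` U `|` V.
  by move=> z /QPR[/PU|/RV]; [left|right].
have [C [[oC cC] Cx CUV]] := clopen_sub_open (openU oU oV) QUV.
have CU : C `&` U = C `&` ~` V.
  apply/seteqP; split=> z [Cz Hz]; split=> //.
    by move=> Vz; have : (U `&` V) z by []; rewrite UV.
  by case: (CUV z Cz) => // /Hz.
have clCU : clopen (C `&` U).
  by split; [exact: openI | rewrite CU; apply: closedI => //; exact: open_closedC].
move=> z Qz; have [_ Uz] := Qz _ clCU (conj Cx (PU x Px)).
case: (QPR z Qz) => // /RV Vz.
by have : (U `&` V) z by []; rewrite UV.
Qed.

Lemma quasi_component_connected (x : T) : connected (quasi_component x).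
Proof.
move=> B [b Bb] [O oO BO] [F cF BF].
have BQ : B `<=` quasi_component x by rewrite BO => z [].
have cB : closed B by rewrite BF; apply: closedI => //; exact: closed_quasi_component.
pose R := quasi_component x `&` ~` O.
have cR : closed R by apply: closedI; [exact: closed_quasi_component | exact: open_closedC].
have BR : B `&` R = set0 by rewrite BO; apply/seteqP; split=> // z [[_ Oz] [_ nOz]].
have QBR : quasi_component x `<=` B `|` R.
  by move=> z Qz; rewrite BO; have [Oz|nOz] := pselect (O z); [left|right].
apply/seteqP; split=> //; have [Bx|nBx] := pselect (B x).
  exact: quasi_component_sub cB cR BR QBR Bx.
have Rx : R x by case: (QBR x (fun C _ => id)).
rewrite setIC in BR; rewrite setUC in QBR.
have [_ nOb] := quasi_component_sub cR cB BR QBR Rx (BQ b Bb).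
by move: Bb; rewrite BO => -[].
Qed.

Lemma compact_totally_disconnected_zero_dimensional :
  totally_disconnected [set: T] -> zero_dimensional T.
Proof.
move=> tdT x y /eqP xy; apply: contrapT => noC; apply: xy.
have Qy : quasi_component x y.
  by move=> C clC Cx; apply: contrapT => nCy; apply: noC; exists C.
have := connected_component_max (fun C _ => id) (@subsetT _ _) (@quasi_component_connected x) Qy.
by rewrite (tdT x I) => ->.
Qed.

End ZeroDimensional.

Lemma profinite_open_normal_trivial (T : topologicalType) (mul : T -> T -> T)
    (inv : T -> T) (e : T) c :
  profinite_group mul inv e ->
  (forall U, open_normal_subgroup mul inv e U -> U c) -> c = e.
Proof.
move=> [tg cT hT tdT] cU; apply: contrapT => ce.
have gl : group_laws mul inv e by case: tg.
have [W [clW We nWc]] : exists W, [/\ clopen W, W e & ~ W c].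
  by apply: compact_totally_disconnected_zero_dimensional => //; apply/eqP => /esym.
apply: nWc; apply: (rstab_sub gl We); apply: (core_sub gl); apply: cU; split.
- exact: (open_core tg cT (clopen_rstab_open tg cT clW) (rstab_subgroup gl W)).
- exact: (core_subgroup gl (rstab_subgroup gl W)).
- exact: (core_normal gl).
Qed.

Section CoprimeAutomorphism.
Variables (G : topologicalType) (mul : G -> G -> G) (inv : G -> G) (e : G).
Variables (A : topologicalType) (amul : A -> A -> A) (ainv : A -> A) (ae : A).
Variables (act : A -> G -> G) (phi : A).
Hypotheses (pnG : pronilpotent_group mul inv e)
  (cop : coprime_automorphism mul inv e amul ainv ae act phi).

Lemma fixed_mul_theta_in_open_normal c g1 g2 U :
  act phi c = c ->
  mul c (theta mul inv act phi g1) = theta mul inv act phi g2 ->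
  open_normal_subgroup mul inv e U -> U c.
Proof.
move=> fc cg12 [oU sU nU].
have [[tgG cG _ _] nilG] := pnG.
have [[tgA cA _ _] _ [act1 actM actH act_cont] _ pi_disj] := cop.
have glG : group_laws mul inv e by case: tgG.
have [cl nil] := nilG U (And3 oU sU nU).
have [m [m_gt0 cmU m_min]] := ex_minn_pos (exists_gpow_in_open_subgroup tgG cG c oU sU).
have [V [[oV sV nV] VU]] :=
  exists_open_normal_kernel_mod tgG cG tgA cA act1 actM act_cont oU sU.
have [n [n_gt0 phinV n_min]] := ex_minn_pos (exists_gpow_in_open_subgroup tgA cA phi oV sV).
have mn : coprime m n.
  rewrite coprime_has_primes //; apply/hasPn => p; rewrite !mem_primes m_gt0 n_gt0 /=.
  case/andP=> p_pr p_n; apply/negP => /andP[_ p_m].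
  apply: (pi_disj p); [exists phi | exists c]; split=> //; split=> //.
    by exists V; split; [split | exists n].
  by exists U; split; [split | exists m].
apply: (fixed_mul_theta_in_normal glG sU nU (actH phi) _ nil m_gt0 mn fc cg12 cmU).
by move=> x; rewrite -(act_gpow act1 actM); exact: VU.
Qed.

End CoprimeAutomorphism.

Theorem lemma4p6 (G : topologicalType) (mul : G -> G -> G) (inv : G -> G) (e : G)
  (A : topologicalType) (amul : A -> A -> A) (ainv : A -> A) (ae : A)
  (act : A -> G -> G) (phi : A) :
  pronilpotent_group mul inv e ->
  coprime_automorphism mul inv e amul ainv ae act phi ->
  forall k1 k2 : G,
    Kset mul inv act phi k1 -> Kset mul inv act phi k2 ->
    theta mul inv act phi k1 = theta mul inv act phi k2 -> k1 = k2.
Proof.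
move=> pnG cop _ _ [g1 _ <-] [g2 _ <-] eq_theta.
have [[[glG _ _] _ _ _] _] := pnG.
have [_ _ [_ _ actH _] _ _] := cop.
set k1 := theta mul inv act phi g1; set k2 := theta mul inv act phi g2.
have fc : act phi (mul k2 (inv k1)) = mul k2 (inv k1).
  exact: (theta_eq_fixed glG (actH phi) eq_theta).
have ck : mul (mul k2 (inv k1)) k1 = k2 by rewrite (mulgKV glG).
have ce := profinite_open_normal_trivial pnG.1
  (fun U => fixed_mul_theta_in_open_normal pnG cop fc ck).
by rewrite -ck ce (mul1g glG).
Qed.
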